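(* Let $m\ge4$ be even, $h=\frac m2$, and $\bar A=\{1,2,\dots,2^{h-1}-1\}$. For any $i\in\bar A$ and $j\in\Gamma_{(h)}$, $C_{i+2^h}\cap C_{j+2^h}\neq\emptyset$ only if $i=j$ and $j\in\Gamma_{(h-1)}$.
   Context: Let $v=2^m-1$. For an integer $i$, $C_i=\{i\cdot 2^s \bmod v: s\ge 0\}$ is the $2$-cyclotomic coset of $i$ modulo $v$. For a positive integer $t$, $\Gamma_{(t)}=\{j:1\le j\le 2^t-1,\ j\text{ odd}\}$. *)

From mathcomp Require Import all_boot.
Set Implicit Arguments. Unset Strict Implicit. Unset Printing Implicit Defensive.

Definition vv (m : nat) : nat := 2 ^ m - 1.

Definition in_coset (m i x : nat) : Prop :=
  exists s : nat, x = (i * 2 ^ s) %% vv m.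

Definition cosets_meet (m i j : nat) : Prop :=
  exists x : nat, in_coset m i x /\ in_coset m j x.

Definition Gamma (t j : nat) : bool := [&& 1 <= j, j <= 2 ^ t - 1 & odd j].

(* Modulo [v = 2^m - 1] doubling is a cyclic shift of [m]-bit words, so if the
   cosets of [a = i + 2^h] and [b = j + 2^h] meet then [b = a * 2^r %[mod v]]
   for some [r < m], where [m = 2h].  Both [a] and [b] lie in [[2^h, 2^(h+1))].
   A shift by [0 < r < h] keeps [a * 2^r] below [v] but doubles it at least,
   leaving that window; a shift by [h < r < m] is inverted by a shift of [b]
   by [m - r < h], the same situation with [a] and [b] exchanged.  A shift by
   exactly [h] maps [a] to [i * 2^h + 1], which lies in the window only when
   [i = 1], forcing [j = 1]. *)
From mathcomp Require Import all_boot zify.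

Set Implicit Arguments.
Unset Strict Implicit.
Unset Printing Implicit Defensive.

Lemma modn_small_eq d x y : x < d -> y < d -> x = y %[mod d] -> x = y.
Proof. by move=> hx hy; rewrite !modn_small. Qed.

Lemma expn_vv m : 2 ^ m = 1 %[mod vv m].
Proof.
have -> : 2 ^ m = vv m + 1 by rewrite /vv; have := expn_gt0 2 m; lia.
by rewrite modnDl.
Qed.

Lemma expnM_vv m k : 2 ^ (m * k) = 1 %[mod vv m].
Proof. by rewrite expnM -modnXm expn_vv modnXm exp1n. Qed.

Lemma mul_expn_period_vv m a e : a * 2 ^ e = a * 2 ^ (e %% m) %[mod vv m].
Proof.
rewrite {1}(divn_eq e m) expnD [e %/ m * m]mulnC mulnCA.
by rewrite -modnMml expnM_vv modnMml mul1n.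
Qed.

Lemma cosets_meet_shift m a b : 0 < m -> cosets_meet m a b ->
  exists2 r, r < m & b = a * 2 ^ r %[mod vv m].
Proof.
move=> hm [x [[s ->] [t e]]].
exists ((s + t * (m - 1)) %% m); first by rewrite ltn_pmod.
rewrite -mul_expn_period_vv expnD mulnA -modnMml e modnMml -mulnA -expnD.
have -> : t + t * (m - 1) = m * t by rewrite addnC -mulnSr subn1 prednK // mulnC.
by rewrite -modnMmr expnM_vv modnMmr muln1.
Qed.

Lemma shift_inverse_vv m a b r : r <= m ->
  b = a * 2 ^ r %[mod vv m] -> a = b * 2 ^ (m - r) %[mod vv m].
Proof.
move=> hr e; rewrite -modnMml e modnMml -mulnA -expnD subnKC //.
by rewrite -modnMmr expn_vv modnMmr muln1.
Qed.

Lemma vv_double h : vv (h + h) = 2 ^ h * 2 ^ h - 1.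
Proof. by rewrite /vv expnD. Qed.

Lemma shift_leaves_window h x y s : 0 < s < h ->
  2 ^ h <= x < 2 ^ h.+1 -> y < 2 ^ h.+1 ->
  y = x * 2 ^ s %[mod vv (h + h)] -> False.
Proof.
move=> /andP[s_gt0 s_lt] /andP[hx hx'] hy e.
have hS : 2 * 2 ^ s <= 2 ^ h by rewrite -expnS leq_exp2l.
have hs2 : 2 <= 2 ^ s by rewrite -[2]/(2 ^ 1) leq_exp2l.
rewrite expnS in hx' hy.
have hv := vv_double h.
have exy : y = x * 2 ^ s by apply: modn_small_eq e; rewrite hv; nia.
nia.
Qed.

Lemma half_shift_vv h i : (i + 2 ^ h) * 2 ^ h = i * 2 ^ h + 1 %[mod vv (h + h)].
Proof.
have -> : (i + 2 ^ h) * 2 ^ h = vv (h + h) + (i * 2 ^ h + 1).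
  by rewrite vv_double; have := expn_gt0 2 h; nia.
by rewrite modnDl.
Qed.

Lemma half_shift_window h i j : 2 <= h -> 1 <= i < 2 ^ (h - 1) -> j < 2 ^ h ->
  j + 2 ^ h = (i + 2 ^ h) * 2 ^ h %[mod vv (h + h)] -> i = j.
Proof.
move=> h2 /andP[hi1 hi] hj; rewrite half_shift_vv.
have eH : 2 ^ h = 2 * 2 ^ (h - 1) by rewrite -expnS; congr (2 ^ _); lia.
have hH : 2 <= 2 ^ (h - 1) by rewrite -[2]/(2 ^ 1) leq_exp2l //; lia.
move/modn_small_eq; rewrite vv_double => e.
have {}e : j + 2 ^ h = i * 2 ^ h + 1 by apply: e; nia.
have : i * 2 ^ h < 2 * 2 ^ h by lia.
rewrite ltn_pmul2r ?expn_gt0 // => i_lt2.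
have i1 : i = 1 by lia.
by move: e; rewrite i1 mul1n; lia.
Qed.

Theorem lemma12 (m : nat) (hm4 : 4 <= m) (hmeven : ~~ odd m) (i j : nat) :
  let h := m./2 in
  1 <= i <= 2 ^ (h - 1) - 1 ->
  Gamma h j ->
  cosets_meet m (i + 2 ^ h) (j + 2 ^ h) ->
  i = j /\ Gamma (h - 1) j.
Proof.
move=> h /andP[hi1 hi2] hG hmeet; have /and3P[hj1 hj2 hjo] := hG.
have em : m = h + h by rewrite /h -[LHS](odd_double_half m) (negbTE hmeven) addnn.
have h2 : 2 <= h by lia.
have eH : 2 ^ h = 2 * 2 ^ (h - 1) by rewrite -expnS; congr (2 ^ _); lia.
have hi : i < 2 ^ (h - 1) by have := expn_gt0 2 (h - 1); lia.
have hj : j < 2 ^ h by have := expn_gt0 2 h; lia.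
have wa : 2 ^ h <= i + 2 ^ h < 2 ^ h.+1 by rewrite leq_addl /= expnS; lia.
have wb : 2 ^ h <= j + 2 ^ h < 2 ^ h.+1 by rewrite leq_addl /= expnS; lia.
suff eij : i = j by split=> //; apply/and3P; split=> //; rewrite -eij.
have [r hr e] := cosets_meet_shift (ltn_trans (isT : 0 < 3) hm4) hmeet.
rewrite em in hr e.
case: (ltngtP r h) => [r_lt | r_gt | r_h].
- have [r0 | r_gt0] := posnP r.
    move: e; rewrite r0 expn0 muln1 => /modn_small_eq; rewrite vv_double => e.
    have : j + 2 ^ h = i + 2 ^ h by apply: e; nia.
    lia.
  by case: (shift_leaves_window _ wa (proj2 (andP wb)) e); apply/andP.
- case: (shift_leaves_window _ wb (proj2 (andP wa)) (shift_inverse_vv (ltnW hr) e)).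
  by apply/andP; lia.
- by rewrite r_h in e; apply: half_shift_window e => //; apply/andP.
Qed.
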